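(* Let $p\in\{1,2\}$. For all $u\in\mathcal C^\infty_c(\mathbb R^2)$, $$\int_{\mathbb R^2}|x|^{2p}|\nabla^2u|^2\lesssim\int_{\mathbb R^2}|x|^{2p}|\Delta u|^2+\int_{\mathbb R^2}|x|^{2p-2}|\nabla u|^2.$$
   Context: $\nabla^2u$ denotes the Hessian of $u$, $|\nabla^2u|^2=\sum_{i,j}(\partial_{ij}u)^2$. *)

From Stdlib Require Import Reals Lra ClassicalEpsilon.
Open Scope R_scope.

Definition continuous2 (f : R -> R -> R) : Prop :=
  forall x y eps, 0 < eps -> exists delta, 0 < delta /\
    forall x' y', (x' - x)^2 + (y' - y)^2 < delta^2 ->
      Rabs (f x' y' - f x y) < eps.

(** C^infinity on R^2: continuous, and both first partial derivatives exist
    everywhere and are themselves C^infinity (coinductively: all iterated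
    partial derivatives exist and are continuous). *)
CoInductive Cinf2 (f : R -> R -> R) : Prop :=
  Cinf2_intro :
    continuous2 f ->
    (exists fx, (forall x y, derivable_pt_lim (fun t => f t y) x (fx x y)) /\ Cinf2 fx) ->
    (exists fy, (forall x y, derivable_pt_lim (fun t => f x t) y (fy x y)) /\ Cinf2 fy) ->
    Cinf2 f.

Definition supported_in_box (u : R -> R -> R) (R0 : R) : Prop :=
  forall x y, R0 < Rabs x \/ R0 < Rabs y -> u x y = 0.

Definition compact_support (u : R -> R -> R) : Prop :=
  exists R0, 0 < R0 /\ supported_in_box u R0.

(** Total Riemann integral: RiemannInt when f is Riemann integrable on [a,b]
    (the value does not depend on the integrability proof), 0 otherwise. *)
Definition Rint (f : R -> R) (a b : R) : R :=
  match excluded_middle_informative (exists _ : Riemann_integrable f a b, True) with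
  | left H => RiemannInt (proj1_sig (constructive_indefinite_description _ H))
  | right _ => 0
  end.

Definition Int_box (f : R -> R -> R) (R0 : R) : R :=
  Rint (fun x => Rint (fun y => f x y) (- R0) R0) (- R0) R0.

(* For u smooth with support in the square [-R0,R0]^2 and the weight
   w = (x^2+y^2)^p, the mixed second-order term is controlled by integration
   by parts: the fields  P = d_y (w ux uyx)  and  Q = d_x (w ux uyy)  have zero
   integral over the square, and  P - Q = w (uxy^2 - uxx uyy) + (lower order),
   where the third-order terms cancel by symmetry of mixed partials.  Since
   |Hess u|^2 = |Lap u|^2 + 2 (uxy^2 - uxx uyy), the lower order terms
   (which carry one derivative of w) are absorbed by Young's inequality,
   using |grad w|^2 <= 4 p^2 w (x^2+y^2)^(p-1).

   It
   holds for every p : nat; the theorem lemmaA1 is the case p in {1, 2}. *)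
From Stdlib Require Import Reals Lra Lia FunctionalExtensionality ClassicalEpsilon.
From Coquelicot Require Import Coquelicot.
Open Scope R_scope.

Lemma derivable_pt_lim_mult3 (f g h : R -> R) x df dg dh :
  derivable_pt_lim f x df -> derivable_pt_lim g x dg -> derivable_pt_lim h x dh ->
  derivable_pt_lim (fun t => f t * g t * h t) x
    (df * g x * h x + f x * dg * h x + f x * g x * dh).
Proof.
  intros Hf Hg Hh.
  replace (df * g x * h x + f x * dg * h x + f x * g x * dh)
    with ((df * g x + f x * dg) * h x + (f x * g x) * dh) by ring.
  apply (derivable_pt_lim_mult (fun t => f t * g t) h); auto.
  apply derivable_pt_lim_mult; auto.
Qed.

Lemma Rabs_lt_of_sum_sq a b d : 0 < d -> a ^ 2 + b ^ 2 < d ^ 2 -> Rabs a < d.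
Proof. intros Hd H; apply Rabs_def1; nra. Qed.

(* Euclidean continuity [continuous2] agrees with Coquelicot's sup-norm
   continuity [continuity_2d_pt], whose theory (Schwarz, parametric
   integrals) we use. *)
Lemma continuous2_iff f : continuous2 f <-> forall x y, continuity_2d_pt f x y.
Proof.
  split.
  - intros Hf x y eps.
    destruct (Hf x y eps (cond_pos eps)) as [d [Hd Hball]].
    assert (Hd2 : 0 < d / 2) by lra.
    exists (mkposreal _ Hd2); simpl; intros u v Hu Hv.
    apply Hball; apply Rabs_def2 in Hu; apply Rabs_def2 in Hv; nra.
  - intros Hf x y eps Heps.
    destruct (Hf x y (mkposreal _ Heps)) as [[d Hd] Hsq]; simpl in Hsq.
    exists d; split; [exact Hd|]; intros u v Huv.
    apply Hsq; [apply (Rabs_lt_of_sum_sq _ (v - y)) | apply (Rabs_lt_of_sum_sq _ (u - x))];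
      lra.
Qed.

Lemma continuity_2d_pt_slice_x f x y :
  continuity_2d_pt f x y -> continuous (fun t => f t y) x.
Proof.
  intros H; apply filterlim_locally; intros eps.
  destruct (H eps) as [d Hd]; exists d; intros t Ht.
  apply Hd; [exact Ht|]. rewrite Rminus_eq_0, Rabs_R0; apply cond_pos.
Qed.

Lemma continuity_2d_pt_slice_y f x y :
  continuity_2d_pt f x y -> continuous (fun t => f x t) y.
Proof.
  intros H; apply filterlim_locally; intros eps.
  destruct (H eps) as [d Hd]; exists d; intros t Ht.
  apply Hd; [|exact Ht]. rewrite Rminus_eq_0, Rabs_R0; apply cond_pos.
Qed.

(* Since Cinf2 is coinductive and the product rule
   produces a sum of products, closure of Cinf2 under these operations is
   proved through this inductive closure (an up-to technique). *)
Inductive SmoothExpr : (R -> R -> R) -> Prop :=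
| SE_base f : Cinf2 f -> SmoothExpr f
| SE_const c : SmoothExpr (fun _ _ => c)
| SE_X : SmoothExpr (fun x _ => x)
| SE_Y : SmoothExpr (fun _ y => y)
| SE_add f g : SmoothExpr f -> SmoothExpr g -> SmoothExpr (fun x y => f x y + g x y)
| SE_mul f g : SmoothExpr f -> SmoothExpr g -> SmoothExpr (fun x y => f x y * g x y)
| SE_ext f g : SmoothExpr f -> (forall x y, f x y = g x y) -> SmoothExpr g.

Lemma SmoothExpr_step f : SmoothExpr f ->
  (forall x y, continuity_2d_pt f x y) /\
  (exists fx, (forall x y, derivable_pt_lim (fun t => f t y) x (fx x y)) /\ SmoothExpr fx) /\
  (exists fy, (forall x y, derivable_pt_lim (fun t => f x t) y (fy x y)) /\ SmoothExpr fy).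
Proof.
  induction 1 as [f [Hc [fx [Hx Cx]] [fy [Hy Cy]]] | c | | | f g _ IHf _ IHg
                 | f g Sf IHf Sg IHg | f g _ IHf Hfg].
  - split; [apply continuous2_iff; exact Hc|].
    split; [exists fx | exists fy]; split; auto using SE_base.
  - split; [intros; apply continuity_2d_pt_const|].
    split; exists (fun _ _ => 0); split; auto using SE_const;
      intros; apply derivable_pt_lim_const.
  - split; [intros; apply continuity_2d_pt_id1|].
    split; [exists (fun _ _ => 1) | exists (fun _ _ => 0)]; split; auto using SE_const;
      intros; [apply derivable_pt_lim_id | apply derivable_pt_lim_const].
  - split; [intros; apply continuity_2d_pt_id2|].
    split; [exists (fun _ _ => 0) | exists (fun _ _ => 1)]; split; auto using SE_const;
      intros; [apply derivable_pt_lim_const | apply derivable_pt_lim_id].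
  - destruct IHf as [cf [[fx [dfx Sfx]] [fy [dfy Sfy]]]].
    destruct IHg as [cg [[gx [dgx Sgx]] [gy [dgy Sgy]]]].
    split; [intros; apply continuity_2d_pt_plus; auto|].
    split; [exists (fun x y => fx x y + gx x y) | exists (fun x y => fy x y + gy x y)];
      split; auto using SE_add; intros; apply derivable_pt_lim_plus; auto.
  - destruct IHf as [cf [[fx [dfx Sfx]] [fy [dfy Sfy]]]].
    destruct IHg as [cg [[gx [dgx Sgx]] [gy [dgy Sgy]]]].
    split; [intros; apply continuity_2d_pt_mult; auto|].
    split; [exists (fun x y => fx x y * g x y + f x y * gx x y)
           | exists (fun x y => fy x y * g x y + f x y * gy x y)];
      split; auto using SE_add, SE_mul; intros.
    + apply (derivable_pt_lim_mult (fun t => f t y) (fun t => g t y)); auto.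
    + apply (derivable_pt_lim_mult (fun t => f x t) (fun t => g x t)); auto.
  - assert (E : f = g) by (do 2 (apply functional_extensionality; intro); auto).
    subst g; exact IHf.
Qed.

Lemma SmoothExpr_Cinf2 : forall f, SmoothExpr f -> Cinf2 f.
Proof.
  cofix CIH. intros f H.
  destruct (SmoothExpr_step f H) as [Hc [[fx [Hx Sx]] [fy [Hy Sy]]]].
  constructor.
  - apply continuous2_iff; exact Hc.
  - exists fx; split; auto.
  - exists fy; split; auto.
Qed.

Lemma SmoothExpr_pow f n : SmoothExpr f -> SmoothExpr (fun x y => f x y ^ n).
Proof.
  intros H; induction n as [|n IH].
  - exact (SE_const 1).
  - exact (SE_mul _ _ H IH).
Qed.

Ltac smooth :=
  apply SmoothExpr_Cinf2;
  solve [repeat first [ apply SE_add | apply SE_mul | apply SmoothExpr_pow | apply SE_const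
                      | apply SE_X | apply SE_Y | (apply SE_base; assumption) ]].

Lemma Cinf2_cont f : Cinf2 f -> forall x y, continuity_2d_pt f x y.
Proof. intros [H _ _]; apply continuous2_iff; exact H. Qed.

(* Any partial derivative of a smooth function is smooth (derivatives are
   unique, so it coincides with the one provided by Cinf2). *)
Lemma Cinf2_dx f g : Cinf2 f ->
  (forall x y, derivable_pt_lim (fun t => f t y) x (g x y)) -> Cinf2 g.
Proof.
  intros [_ [fx [Hx Cx]] _] Hg.
  replace g with fx; [exact Cx|].
  do 2 (apply functional_extensionality; intro); eapply uniqueness_limite; eauto.
Qed.

Lemma Cinf2_dy f g : Cinf2 f ->
  (forall x y, derivable_pt_lim (fun t => f x t) y (g x y)) -> Cinf2 g.
Proof.
  intros [_ _ [fy [Hy Cy]]] Hg.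
  replace g with fy; [exact Cy|].
  do 2 (apply functional_extensionality; intro); eapply uniqueness_limite; eauto.
Qed.

Lemma Rint_RInt g a b : ex_RInt g a b -> Rint g a b = RInt g a b.
Proof.
  intros H; unfold Rint; destruct excluded_middle_informative as [He|Hn].
  - symmetry; apply RInt_Reals.
  - exfalso; apply Hn; exists (ex_RInt_Reals_0 _ _ _ H); exact I.
Qed.

Lemma inner_ex_RInt f x a b : Cinf2 f -> ex_RInt (fun y => f x y) a b.
Proof.
  intros H; apply (@ex_RInt_continuous R_CompleteNormedModule); intros z _.
  apply continuity_2d_pt_slice_y, Cinf2_cont; exact H.
Qed.

Lemma RInt_param_derive f fx a b : Cinf2 f ->
  (forall x y, derivable_pt_lim (fun t => f t y) x (fx x y)) ->
  forall x, is_derive (fun x => RInt (fun y => f x y) a b) x (RInt (fun y => fx x y) a b).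
Proof.
  intros Hf Hd x.
  assert (Cx : Cinf2 fx) by (eapply Cinf2_dx; eauto).
  assert (E : forall u v, Derive (fun z => f z v) u = fx u v)
    by (intros; apply is_derive_unique, is_derive_Reals, Hd).
  rewrite <- (RInt_ext (fun t => Derive (fun u => f u t) x)) by (intros; apply E).
  apply (is_derive_RInt_param f a b x).
  - apply filter_forall; intros y t _; exists (fx y t); apply is_derive_Reals, Hd.
  - intros t _; apply (continuity_2d_pt_ext fx); [intros; symmetry; apply E|].
    apply Cinf2_cont; exact Cx.
  - apply filter_forall; intros y; apply inner_ex_RInt; exact Hf.
Qed.

Lemma RInt_param_continuous f a b : Cinf2 f ->
  forall x, continuous (fun x => RInt (fun y => f x y) a b) x.
Proof.
  intros Hf x; pose proof Hf as [_ [fx [Hx _]] _].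
  apply (@ex_derive_continuous R_AbsRing R_NormedModule).
  exists (RInt (fun y => fx x y) a b); apply RInt_param_derive; auto.
Qed.

Lemma outer_ex_RInt f a b c d : Cinf2 f ->
  ex_RInt (fun x => RInt (fun y => f x y) c d) a b.
Proof.
  intros H; apply (@ex_RInt_continuous R_CompleteNormedModule); intros z _.
  apply RInt_param_continuous; exact H.
Qed.

Lemma Int_box_RInt f R0 : Cinf2 f ->
  Int_box f R0 = RInt (fun x => RInt (fun y => f x y) (- R0) R0) (- R0) R0.
Proof.
  intros H; unfold Int_box.
  rewrite (Rint_RInt (fun x => Rint (fun y => f x y) (- R0) R0)).
  - apply RInt_ext; intros x _; apply Rint_RInt, inner_ex_RInt; exact H.
  - apply (ex_RInt_ext (fun x => RInt (fun y => f x y) (- R0) R0)).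
    + intros x _; symmetry; apply Rint_RInt, inner_ex_RInt; exact H.
    + apply outer_ex_RInt; exact H.
Qed.

Lemma Int_box_plus f g R0 : Cinf2 f -> Cinf2 g ->
  Int_box (fun x y => f x y + g x y) R0 = Int_box f R0 + Int_box g R0.
Proof.
  intros Hf Hg.
  rewrite !Int_box_RInt by (auto; smooth).
  rewrite (RInt_ext _ (fun x => RInt (fun y => f x y) (- R0) R0
                               + RInt (fun y => g x y) (- R0) R0)).
  - exact (RInt_plus _ _ _ _ (outer_ex_RInt f _ _ _ _ Hf) (outer_ex_RInt g _ _ _ _ Hg)).
  - intros x _.
    exact (RInt_plus _ _ _ _ (inner_ex_RInt f x _ _ Hf) (inner_ex_RInt g x _ _ Hg)).
Qed.

Lemma Int_box_scal f k R0 : Cinf2 f ->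
  Int_box (fun x y => k * f x y) R0 = k * Int_box f R0.
Proof.
  intros Hf.
  rewrite !Int_box_RInt by (auto; smooth).
  rewrite (RInt_ext _ (fun x => k * RInt (fun y => f x y) (- R0) R0)).
  - exact (RInt_scal _ _ _ k (outer_ex_RInt f _ _ _ _ Hf)).
  - intros x _; exact (RInt_scal _ _ _ k (inner_ex_RInt f x _ _ Hf)).
Qed.

Lemma Int_box_le f g R0 : 0 < R0 -> Cinf2 f -> Cinf2 g ->
  (forall x y, f x y <= g x y) -> Int_box f R0 <= Int_box g R0.
Proof.
  intros HR Hf Hg Hle; rewrite !Int_box_RInt by assumption.
  apply RInt_le; [lra | apply outer_ex_RInt; assumption | apply outer_ex_RInt; assumption|].
  intros x _; apply RInt_le; [lra | apply inner_ex_RInt; assumption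
                             | apply inner_ex_RInt; assumption|].
  intros y _; apply Hle.
Qed.

Lemma Int_box_le_mod_null f g h P Q c k R0 : 0 < R0 ->
  Cinf2 f -> Cinf2 g -> Cinf2 h -> Cinf2 P -> Cinf2 Q ->
  Int_box P R0 = 0 -> Int_box Q R0 = 0 ->
  (forall x y, f x y <= c * (g x y + h x y) + k * P x y - k * Q x y) ->
  Int_box f R0 <= c * (Int_box g R0 + Int_box h R0).
Proof.
  intros HR Hf Hg Hh HP HQ IP IQ Hle.
  apply Rle_trans with
    (Int_box (fun x y => c * (g x y + h x y) + (k * P x y + - k * Q x y)) R0).
  - apply Int_box_le; [assumption | assumption | smooth|].
    intros x y; specialize (Hle x y); lra.
  - rewrite (Int_box_plus (fun x y => c * (g x y + h x y))) by smooth.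
    rewrite (Int_box_scal (fun x y => g x y + h x y)), Int_box_plus by smooth.
    rewrite (Int_box_plus (fun x y => k * P x y)) by smooth.
    rewrite !Int_box_scal, IP, IQ by assumption.
    lra.
Qed.

Lemma RInt_zero_fun (h : R -> R) a b : (forall y, h y = 0) -> RInt h a b = 0.
Proof.
  intros H; rewrite (RInt_ext h (fun _ => 0)) by auto.
  rewrite RInt_const; unfold scal; simpl; unfold mult; simpl; ring.
Qed.

Lemma Int_box_dy_zero G Gy R0 : Cinf2 G ->
  (forall x y, derivable_pt_lim (fun t => G x t) y (Gy x y)) ->
  (forall x, G x R0 = 0 /\ G x (- R0) = 0) -> Int_box Gy R0 = 0.
Proof.
  intros HG Hd Hb; assert (Cy : Cinf2 Gy) by (eapply Cinf2_dy; eauto).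
  rewrite Int_box_RInt by assumption; apply RInt_zero_fun; intros x.
  rewrite (is_RInt_unique (fun y => Gy x y) (- R0) R0 (G x R0 - G x (- R0))).
  - destruct (Hb x) as [-> ->]; ring.
  - apply (is_RInt_derive (fun y => G x y) (fun y => Gy x y)).
    + intros y _; apply is_derive_Reals, Hd.
    + intros y _; apply continuity_2d_pt_slice_y, Cinf2_cont; exact Cy.
Qed.

Lemma Int_box_dx_zero G Gx R0 : Cinf2 G ->
  (forall x y, derivable_pt_lim (fun t => G t y) x (Gx x y)) ->
  (forall y, G R0 y = 0 /\ G (- R0) y = 0) -> Int_box Gx R0 = 0.
Proof.
  intros HG Hd Hb; assert (Cx : Cinf2 Gx) by (eapply Cinf2_dx; eauto).
  rewrite Int_box_RInt by assumption.
  rewrite (is_RInt_unique _ (- R0) R0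
    (RInt (fun y => G R0 y) (- R0) R0 - RInt (fun y => G (- R0) y) (- R0) R0)).
  - rewrite !RInt_zero_fun; [ring | |]; intros y; apply Hb.
  - apply (is_RInt_derive (fun x => RInt (fun y => G x y) (- R0) R0)).
    + intros x _; apply RInt_param_derive; assumption.
    + intros x _; apply RInt_param_continuous; exact Cx.
Qed.

Lemma mixed_partials_commute f fx fy fxy fyx : Cinf2 f ->
  (forall x y, derivable_pt_lim (fun t => f t y) x (fx x y)) ->
  (forall x y, derivable_pt_lim (fun t => f x t) y (fy x y)) ->
  (forall x y, derivable_pt_lim (fun t => fx x t) y (fxy x y)) ->
  (forall x y, derivable_pt_lim (fun t => fy t y) x (fyx x y)) ->
  forall x y, fxy x y = fyx x y.
Proof.
  intros Hf Hx Hy Hxy Hyx x y.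
  assert (Cxy : Cinf2 fxy) by exact (Cinf2_dy _ _ (Cinf2_dx _ _ Hf Hx) Hxy).
  assert (Cyx : Cinf2 fyx) by exact (Cinf2_dx _ _ (Cinf2_dy _ _ Hf Hy) Hyx).
  assert (Ex : forall u v, Derive (fun t => f t v) u = fx u v)
    by (intros; apply is_derive_unique, is_derive_Reals, Hx).
  assert (Ey : forall u v, Derive (fun t => f u t) v = fy u v)
    by (intros; apply is_derive_unique, is_derive_Reals, Hy).
  assert (Exy : forall u v, Derive (fun z => Derive (fun t => f t z) u) v = fxy u v).
  { intros u v; rewrite (Derive_ext _ (fun z => fx u z)) by auto.
    apply is_derive_unique, is_derive_Reals, Hxy. }
  assert (Eyx : forall u v, Derive (fun z => Derive (fun t => f z t) v) u = fyx u v).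
  { intros u v; rewrite (Derive_ext _ (fun z => fy z v)) by auto.
    apply is_derive_unique, is_derive_Reals, Hyx. }
  rewrite <- Exy, <- Eyx; symmetry; apply Schwarz.
  - apply locally_2d_forall; intros u v; repeat split.
    + exists (fx u v); apply is_derive_Reals, Hx.
    + exists (fy u v); apply is_derive_Reals, Hy.
    + apply (ex_derive_ext (fun z => fy z v)); [intros; symmetry; apply Ey|].
      exists (fyx u v); apply is_derive_Reals, Hyx.
    + apply (ex_derive_ext (fun z => fx u z)); [intros; symmetry; apply Ex|].
      exists (fxy u v); apply is_derive_Reals, Hxy.
  - apply (continuity_2d_pt_ext fyx); [intros; symmetry; apply Eyx|].
    apply Cinf2_cont; exact Cyx.
  - apply (continuity_2d_pt_ext fxy); [intros; symmetry; apply Exy|].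
    apply Cinf2_cont; exact Cxy.
Qed.

(* A function continuous at a and vanishing on {|t| > r} vanishes at a when
   r <= |a|: a is a limit of points further from 0. *)
Lemma vanish_at_boundary (g : R -> R) a r : r <= Rabs a -> continuous g a ->
  (forall t, r < Rabs t -> g t = 0) -> g a = 0.
Proof.
  intros Ha Hc Hout.
  destruct (Req_dec (g a) 0) as [|Hne]; [assumption|exfalso].
  assert (Heps : 0 < Rabs (g a)) by (apply Rabs_pos_lt; exact Hne).
  destruct (proj1 (filterlim_locally g (g a)) Hc (mkposreal _ Heps)) as [[d Hd] Hball].
  assert (Hfar : exists t, Rabs (t - a) < d /\ Rabs a < Rabs t).
  { destruct (Rle_dec 0 a).
    - exists (a + d / 2); split.
      + replace (a + d / 2 - a) with (d / 2) by ring; rewrite Rabs_pos_eq; lra.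
      + rewrite (Rabs_pos_eq a), (Rabs_pos_eq (a + d / 2)); lra.
    - exists (a - d / 2); split.
      + replace (a - d / 2 - a) with (- (d / 2)) by ring.
        rewrite Rabs_Ropp, Rabs_pos_eq; lra.
      + rewrite (Rabs_left a), (Rabs_left (a - d / 2)); lra. }
  destruct Hfar as [t [Hta Hat]].
  specialize (Hball t Hta); simpl in Hball; rewrite (Hout t) in Hball by lra.
  unfold ball in Hball; simpl in Hball; unfold AbsRing_ball, abs, minus, plus, opp in Hball.
  simpl in Hball; rewrite Rplus_0_l, Rabs_Ropp in Hball; lra.
Qed.

Lemma derivative_locally_zero (g : R -> R) x d l : 0 < d ->
  (forall t, Rabs (t - x) < d -> g t = 0) -> derivable_pt_lim g x l -> l = 0.
Proof.
  intros Hd Hg Hl; eapply uniqueness_limite; [exact Hl|].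
  intros eps He; exists (mkposreal d Hd); intros h _ Hh; simpl in Hh.
  rewrite (Hg (x + h)), (Hg x).
  - replace ((0 - 0) / h - 0) with 0 by (unfold Rdiv; ring); rewrite Rabs_R0; exact He.
  - rewrite Rminus_eq_0, Rabs_R0; exact Hd.
  - replace (x + h - x) with h by ring; exact Hh.
Qed.

Lemma partial_x_vanishes_off_box u ux R0 : supported_in_box u R0 -> Cinf2 ux ->
  (forall x y, derivable_pt_lim (fun t => u t y) x (ux x y)) ->
  forall x y, R0 <= Rabs x \/ R0 <= Rabs y -> ux x y = 0.
Proof.
  intros Hs Hc Hd.
  assert (Hout : forall x y, R0 < Rabs x \/ R0 < Rabs y -> ux x y = 0).
  { intros x y [Hx|Hy].
    - apply (derivative_locally_zero (fun t => u t y) x (Rabs x - R0)); [lra| |apply Hd].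
      intros t Ht; apply Hs; left.
      pose proof (Rabs_triang_inv x (x - t)) as Htri.
      replace (x - (x - t)) with t in Htri by ring.
      rewrite Rabs_minus_sym in Ht; lra.
    - apply (derivative_locally_zero (fun t => u t y) x 1); [lra| |apply Hd].
      intros t _; apply Hs; right; exact Hy. }
  intros x y [Hx|Hy].
  - apply (vanish_at_boundary (fun t => ux t y) x R0 Hx).
    + apply continuity_2d_pt_slice_x, Cinf2_cont; exact Hc.
    + intros t Ht; apply Hout; left; exact Ht.
  - apply (vanish_at_boundary (fun t => ux x t) y R0 Hy).
    + apply continuity_2d_pt_slice_y, Cinf2_cont; exact Hc.
    + intros t Ht; apply Hout; right; exact Ht.
Qed.

Lemma weight_dx p x y :
  derivable_pt_lim (fun t => (t ^ 2 + y ^ 2) ^ p) x (INR p * (x ^ 2 + y ^ 2) ^ (p - 1) * (2 * x)).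
Proof.
  replace (p - 1)%nat with (Nat.pred p) by lia.
  replace (INR p * (x ^ 2 + y ^ 2) ^ Nat.pred p * (2 * x))
    with ((INR p * (x ^ 2 + y ^ 2) ^ Nat.pred p) * (INR 2 * x ^ Nat.pred 2 + 0)) by (simpl; ring).
  apply (derivable_pt_lim_comp (fun t => t ^ 2 + y ^ 2) (fun z => z ^ p)).
  - apply derivable_pt_lim_plus; [apply derivable_pt_lim_pow | apply derivable_pt_lim_const].
  - apply derivable_pt_lim_pow.
Qed.

Lemma weight_dy p x y :
  derivable_pt_lim (fun t => (x ^ 2 + t ^ 2) ^ p) y (INR p * (x ^ 2 + y ^ 2) ^ (p - 1) * (2 * y)).
Proof.
  replace (x ^ 2 + y ^ 2) with (y ^ 2 + x ^ 2) by ring.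
  apply (derivable_pt_lim_ext (fun t => (t ^ 2 + x ^ 2) ^ p)).
  - intros t; f_equal; ring.
  - apply weight_dx.
Qed.

(* Young's inequality for a derivative of the weight: since
   (d_x w)^2 <= 4 p^2 w (x^2+y^2)^(p-1), the term 2 (d_x w) s t is absorbed
   by a quarter of w t^2. *)
Lemma weight_gradient_bound p a b s t :
  2 * (INR p * (a ^ 2 + b ^ 2) ^ (p - 1) * (2 * a)) * s * t
  <= 1/4 * (a ^ 2 + b ^ 2) ^ p * t ^ 2 + 16 * INR p ^ 2 * (a ^ 2 + b ^ 2) ^ (p - 1) * s ^ 2.
Proof.
  destruct p as [|q]; [simpl; nra|].
  replace (S q - 1)%nat with q by lia.
  set (r := a ^ 2 + b ^ 2); set (n := INR (S q)).
  assert (Hr : 0 <= r ^ q) by (apply pow_le; unfold r; nra).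
  assert (Hsq : 0 <= r ^ q * ((a * t / 2 - 4 * n * s) ^ 2 + 1/4 * b ^ 2 * t ^ 2))
    by (apply Rmult_le_pos; [exact Hr|];
        pose proof (pow2_ge_0 (a * t / 2 - 4 * n * s)); pose proof (pow2_ge_0 (b * t)); nra).
  enough (E : 1/4 * r ^ S q * t ^ 2 + 16 * n ^ 2 * r ^ q * s ^ 2
               - 2 * (n * r ^ q * (2 * a)) * s * t
             = r ^ q * ((a * t / 2 - 4 * n * s) ^ 2 + 1/4 * b ^ 2 * t ^ 2)) by lra.
  simpl (r ^ S q); unfold r; field.
Qed.

Definition hessian_const (p : nat) : R := 4/3 * (1 + 32 * INR p ^ 2).

Lemma hessian_const_pos p : 0 < hessian_const p.
Proof. unfold hessian_const; pose proof (pow2_ge_0 (INR p)); lra. Qed.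

(* The pointwise inequality behind the estimate, with w = (a^2+b^2)^p and
   v = (a^2+b^2)^(p-1), at a point where the mixed partials are symmetric
   (dxy = d_x d_y u = d_y d_x u and dxyy the common third mixed partial):
   w |Hess|^2 <= C (w |Lap|^2 + v |grad|^2) + 8/3 (P - Q), with P and Q the
   expanded divergence terms d_y (w ux uxy) and d_x (w ux uyy). *)
Lemma hessian_pointwise p a b dx dy dxx dxy dyy dxyy :
  (a ^ 2 + b ^ 2) ^ p * (dxx ^ 2 + dxy ^ 2 + dxy ^ 2 + dyy ^ 2)
  <= hessian_const p * ((a ^ 2 + b ^ 2) ^ p * (dxx + dyy) ^ 2
                        + (a ^ 2 + b ^ 2) ^ (p - 1) * (dx ^ 2 + dy ^ 2))
     + 8/3 * (INR p * (a ^ 2 + b ^ 2) ^ (p - 1) * (2 * b) * dx * dxy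
              + (a ^ 2 + b ^ 2) ^ p * dxy * dxy + (a ^ 2 + b ^ 2) ^ p * dx * dxyy)
     - 8/3 * (INR p * (a ^ 2 + b ^ 2) ^ (p - 1) * (2 * a) * dx * dyy
              + (a ^ 2 + b ^ 2) ^ p * dxx * dyy + (a ^ 2 + b ^ 2) ^ p * dx * dxyy).
Proof.
  pose proof (weight_gradient_bound p a b dx dyy) as Hx.
  pose proof (weight_gradient_bound p b a (- dx) dxy) as Hy.
  replace (b ^ 2 + a ^ 2) with (a ^ 2 + b ^ 2) in Hy by ring.
  unfold hessian_const.
  set (w := (a ^ 2 + b ^ 2) ^ p) in *; set (v := (a ^ 2 + b ^ 2) ^ (p - 1)) in *.
  set (n := INR p) in *.
  assert (Hw : 0 <= w) by (apply pow_le; nra).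
  assert (Hv : 0 <= v) by (apply pow_le; nra).
  assert (Hlap : 0 <= n ^ 2 * (w * (dxx + dyy) ^ 2))
    by (apply Rmult_le_pos; [apply pow2_ge_0 | apply Rmult_le_pos; [lra | apply pow2_ge_0]]).
  assert (Hgrad : 0 <= v * (dx ^ 2 + dy ^ 2))
    by (apply Rmult_le_pos; [lra | pose proof (pow2_ge_0 dx); pose proof (pow2_ge_0 dy); lra]).
  assert (Hxx : 0 <= w * dxx ^ 2) by (apply Rmult_le_pos; [lra | apply pow2_ge_0]).
  assert (Hxy : 0 <= w * dxy ^ 2) by (apply Rmult_le_pos; [lra | apply pow2_ge_0]).
  assert (Hyy : 0 <= n ^ 2 * v * dy ^ 2)
    by (apply Rmult_le_pos; [apply Rmult_le_pos; [apply pow2_ge_0 | lra] | apply pow2_ge_0]).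
  (* absorbing the lower order terms leaves 3/4 of the Hessian *)
  assert (Habsorb : 3/4 * (w * (dxx ^ 2 + dxy ^ 2 + dxy ^ 2 + dyy ^ 2))
    <= w * (dxx + dyy) ^ 2 + 32 * n ^ 2 * (v * (dx ^ 2 + dy ^ 2))
       + 2 * (n * v * (2 * b) * dx * dxy + w * dxy * dxy + w * dx * dxyy)
       - 2 * (n * v * (2 * a) * dx * dyy + w * dxx * dyy + w * dx * dxyy)) by nra.
  nra.
Qed.

Theorem weighted_hessian_estimate (p : nat) (u ux uy uxx uxy uyx uyy : R -> R -> R) (R0 : R) :
  Cinf2 u ->
  (forall x y, derivable_pt_lim (fun t => u t y) x (ux x y)) ->
  (forall x y, derivable_pt_lim (fun t => u x t) y (uy x y)) ->
  (forall x y, derivable_pt_lim (fun t => ux t y) x (uxx x y)) ->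
  (forall x y, derivable_pt_lim (fun t => ux x t) y (uxy x y)) ->
  (forall x y, derivable_pt_lim (fun t => uy t y) x (uyx x y)) ->
  (forall x y, derivable_pt_lim (fun t => uy x t) y (uyy x y)) ->
  0 < R0 -> supported_in_box u R0 ->
  Int_box (fun x y => (x^2 + y^2)^p *
             (uxx x y ^ 2 + uxy x y ^ 2 + uyx x y ^ 2 + uyy x y ^ 2)) R0
  <= hessian_const p *
       (Int_box (fun x y => (x^2 + y^2)^p * (uxx x y + uyy x y) ^ 2) R0
        + Int_box (fun x y => (x^2 + y^2)^(p - 1) * (ux x y ^ 2 + uy x y ^ 2)) R0).
Proof.
  intros Hu Hux Huy Huxx Huxy Huyx Huyy HR0 Hs.
  pose proof (Cinf2_dx _ _ Hu Hux) as Cux; pose proof (Cinf2_dy _ _ Hu Huy) as Cuy.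
  pose proof (Cinf2_dx _ _ Cux Huxx) as Cuxx; pose proof (Cinf2_dy _ _ Cux Huxy) as Cuxy.
  pose proof (Cinf2_dx _ _ Cuy Huyx) as Cuyx; pose proof (Cinf2_dy _ _ Cuy Huyy) as Cuyy.
  pose proof Cuyy as [_ [uyyx [Huyyx Cuyyx]] _].
  pose proof Cuyx as [_ _ [uyxy [Huyxy Cuyxy]]].
  pose proof (mixed_partials_commute _ _ _ _ _ Hu Hux Huy Huxy Huyx) as Sym2.
  pose proof (mixed_partials_commute _ _ _ _ _ Cuy Huyx Huyy Huyxy Huyyx) as Sym3.
  pose proof (partial_x_vanishes_off_box _ _ _ Hs Cux Hux) as Hbd.
  (* the divergence terms d_y (w ux uyx) and d_x (w ux uyy) integrate to zero *)
  set (P := fun x y => INR p * (x^2 + y^2)^(p - 1) * (2 * y) * ux x y * uyx x y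
                     + (x^2 + y^2)^p * uxy x y * uyx x y + (x^2 + y^2)^p * ux x y * uyxy x y).
  set (Q := fun x y => INR p * (x^2 + y^2)^(p - 1) * (2 * x) * ux x y * uyy x y
                     + (x^2 + y^2)^p * uxx x y * uyy x y + (x^2 + y^2)^p * ux x y * uyyx x y).
  assert (IP : Int_box P R0 = 0).
  { apply (Int_box_dy_zero (fun x y => (x^2 + y^2)^p * ux x y * uyx x y)); [smooth| |].
    - intros x y; unfold P.
      apply (derivable_pt_lim_mult3 (fun t => (x^2 + t^2)^p) (fun t => ux x t) (fun t => uyx x t));
        auto using weight_dy.
    - intros x; rewrite !Hbd; [split; ring | |]; right;
        rewrite ?Rabs_Ropp, Rabs_pos_eq; lra. }
  assert (IQ : Int_box Q R0 = 0).
  { apply (Int_box_dx_zero (fun x y => (x^2 + y^2)^p * ux x y * uyy x y)); [smooth| |].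
    - intros x y; unfold Q.
      apply (derivable_pt_lim_mult3 (fun t => (t^2 + y^2)^p) (fun t => ux t y) (fun t => uyy t y));
        auto using weight_dx.
    - intros y; rewrite !Hbd; [split; ring | |]; left;
        rewrite ?Rabs_Ropp, Rabs_pos_eq; lra. }
  apply (Int_box_le_mod_null _ _ _ P Q _ (8/3) R0 HR0); try smooth; [exact IP | exact IQ |].
  intros x y; unfold P, Q; rewrite <- Sym2, Sym3; apply hessian_pointwise.
Qed.

Theorem lemmaA1 :
  forall p : nat, (p = 1 \/ p = 2)%nat ->
  exists C : R, 0 < C /\
  forall (u ux uy uxx uxy uyx uyy : R -> R -> R),
    Cinf2 u -> compact_support u ->
    (forall x y, derivable_pt_lim (fun t => u t y) x (ux x y)) ->
    (forall x y, derivable_pt_lim (fun t => u x t) y (uy x y)) ->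
    (forall x y, derivable_pt_lim (fun t => ux t y) x (uxx x y)) ->
    (forall x y, derivable_pt_lim (fun t => ux x t) y (uxy x y)) ->
    (forall x y, derivable_pt_lim (fun t => uy t y) x (uyx x y)) ->
    (forall x y, derivable_pt_lim (fun t => uy x t) y (uyy x y)) ->
    forall R0 : R, 0 < R0 -> supported_in_box u R0 ->
      Int_box (fun x y => (x^2 + y^2)^p *
                 (uxx x y ^ 2 + uxy x y ^ 2 + uyx x y ^ 2 + uyy x y ^ 2)) R0
      <= C * (Int_box (fun x y => (x^2 + y^2)^p * (uxx x y + uyy x y) ^ 2) R0
              + Int_box (fun x y => (x^2 + y^2)^(p - 1) * (ux x y ^ 2 + uy x y ^ 2)) R0).
Proof.
  intros p _; exists (hessian_const p); split; [apply hessian_const_pos|].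
  intros u ux uy uxx uxy uyx uyy Hu _ Hux Huy Huxx Huxy Huyx Huyy R0 HR0 Hs.
  exact (weighted_hessian_estimate p u ux uy uxx uxy uyx uyy R0
           Hu Hux Huy Huxx Huxy Huyx Huyy HR0 Hs).
Qed.
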